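(* Consider the age-structured multispecies map $h$ described in the context, and suppose $\bm{y}^\ast=h(\bm{y}^\ast)$ is an equilibrium whose adult part is an interior equilibrium $\bm{x}^\ast=(y^\ast_{\delta_1\mid 1},\dots,y^\ast_{\delta_m\mid m})^\top>\bm{0}$ (all entries positive). Let $\bm{J}^\ast$ be the $n\times n$ Jacobian of $h$ at $\bm{y}^\ast$, $n=m+\sum_{i}\delta_i$, and let a permutation bring $\bm{J}^\ast$ to lower block-triangular form whose diagonal blocks $\bm{J}^\ast(\alpha_w,\alpha_w)$, $w=1,\dots,r$, are square and either irreducible or a $1\times 1$ zero, where $\alpha_1,\dots,\alpha_r$ is the corresponding partition of the index set. For each $w$ let $\mathcal{D}_w\subseteq\mathcal{M}$ be the set of species having nodes (age classes) in $\alpha_w$. If for every $w\in\{1,\dots,r\}$ and every $i\in\mathcal{D}_w$ $$\Bigl\{\Bigl|G_i(\bm{x}^\ast)+x_i^\ast\tfrac{\partial G_i}{\partial x_i}(\bm{x}^\ast)\Bigr| + \sum_{j\in\mathcal{D}_w\setminus\{i\}}\Bigl|x_i^\ast\tfrac{\partial G_i}{\partial x_j}(\bm{x}^\ast)\Bigr|\Bigr\}\prod_{a=0}^{\delta_i-1}\sigma_{a\mid i} \;<\; z_i,$$ then $\rho(\bm{J}^\ast)<1$, i.e. the equilibrium is locally asymptotically stable.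
   Context: Let $m\ge 1$ and $\mathcal{M}=\{1,\dots,m\}$. For each species $i\in\mathcal{M}$: a maturation delay $\delta_i\in\{0,1,2,\dots\}$; immature survival probabilities $\sigma_{a\mid i}\in(0,1]$ for $a=0,\dots,\delta_i-1$; an adult survival probability $\sigma_{\delta_i\mid i}\in(0,1)$ with adult mortality $z_i=1-\sigma_{\delta_i\mid i}$; an empty product $\prod_{a=0}^{-1}$ equals $1$. Each $G_i:\mathbb{R}^m\to\mathbb{R}$ is a differentiable per capita growth function. The state is $\bm{y}=(y_{a\mid i})$, indexed by $i\in\mathcal{M}$, $a\in\{0,\dots,\delta_i\}$ (ordered species by species), of dimension $n=m+\sum_i\delta_i$; the adult vector is $\bm{x}=(y_{\delta_1\mid 1},\dots,y_{\delta_m\mid m})^\top$. The map $h:\mathbb{R}^n\to\mathbb{R}^n$ is: if $\delta_i>0$, $h_{0\mid i}(\bm{y})=G_i(\bm{x})\,y_{\delta_i\mid i}$, $h_{a\mid i}(\bm{y})=\sigma_{a-1\mid i}y_{a-1\mid i}$ for $1\le a\le\delta_i-1$, and $h_{\delta_i\mid i}(\bm{y})=\sigma_{\delta_i-1\mid i}y_{\delta_i-1\mid i}+\sigma_{\delta_i\mid i}y_{\delta_i\mid i}$; if $\delta_i=0$, $h_{0\mid i}(\bm{y})=\sigma_{0\mid i}y_{0\mid i}+G_i(\bm{x})y_{0\mid i}$. (This is equivalent to the delay system $x_i(t+1)=\sigma_{\delta_i\mid i}x_i(t)+x_i(t-\delta_i)G_i(\bm{x}(t-\delta_i))\prod_{a=0}^{\delta_i-1}\sigma_{a\mid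 i}$.) The Jacobian $\bm{J}^\ast$ at an equilibrium $\bm{y}^\ast$ has entries $\partial h_{a\mid i}/\partial y_{b\mid j}$ evaluated at $\bm{y}^\ast$; in particular the entry of row $(0\mid i)$, column $(\delta_i\mid i)$ is $G_i(\bm{x}^\ast)+x_i^\ast\partial G_i/\partial x_i(\bm{x}^\ast)$ (plus $\sigma_{0\mid i}$ if $\delta_i=0$) and the entry of row $(0\mid i)$, column $(\delta_j\mid j)$, $j\neq i$, is $x_i^\ast\partial G_i/\partial x_j(\bm{x}^\ast)$. $\rho(\cdot)$ denotes spectral radius. An equilibrium is called locally asymptotically stable if $\rho(\bm{J}^\ast)<1$. *)

From HB Require Import structures.
From mathcomp Require Import all_boot all_order all_algebra.
From mathcomp Require Import all_classical all_reals all_analysis.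
From mathcomp Require Import complex.

Set Implicit Arguments.
Unset Strict Implicit.
Unset Printing Implicit Defensive.

Import Order.TTheory GRing.Theory Num.Theory.
Import numFieldNormedType.Exports.
Local Open Scope ring_scope.

(* Nodes (age classes) (a | i), i species, 0 <= a <= delta_i.
   The number of nodes is n = m + sum_i delta_i. *)
Definition node (m : nat) (delta : 'I_m -> nat) : finType :=
  {i : 'I_m & 'I_(delta i).+1}.

Definition spec {m} {delta : 'I_m -> nat} (p : node delta) : 'I_m := tag p.
Definition age {m} {delta : 'I_m -> nat} (p : node delta) : nat := tagged p.

Definition adults (R : realType) m (delta : 'I_m -> nat)
    (y : node delta -> R) : 'rV[R]_m :=
  \row_i y (@Tagged _ i (fun i => 'I_(delta i).+1) ord_max).

Definition pderiv (R : realType) m (F : 'rV[R]_m -> R) (j : 'I_m) (x : 'rV[R]_m) : R :=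
  'D_(delta_mx 0 j) F x.

(* The map h of the model; sigma i a = sigma_{a|i}. *)
Definition hmap (R : realType) m (delta : 'I_m -> nat) (sigma : 'I_m -> nat -> R)
    (G : 'I_m -> 'rV[R]_m -> R) (y : node delta -> R) (p : node delta) : R :=
  let i := spec p in let a := age p in
  let yi := fun b : nat => y (@Tagged _ i (fun i => 'I_(delta i).+1) (inord b)) in
  if delta i == 0%N then sigma i 0%N * yi 0%N + G i (adults y) * yi 0%N
  else if a == 0%N then G i (adults y) * yi (delta i)
  else if (a < delta i)%N then sigma i a.-1 * yi a.-1
  else sigma i a.-1 * yi a.-1 + sigma i (delta i) * yi (delta i).

(* The Jacobian of hmap at y (entries written out as in the paper):
   row (a|i), column (b|j). *)
Definition jac (R : realType) m (delta : 'I_m -> nat) (sigma : 'I_m -> nat -> R)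
    (G : 'I_m -> 'rV[R]_m -> R) (y : node delta -> R) (p q : node delta) : R :=
  let i := spec p in let a := age p in let j := spec q in let b := age q in
  let x := adults y in
  (if (a == 0%N) && (b == delta j) then
     (if i == j then G i x else 0) + x 0 i * pderiv (G i) j x else 0)
  + (if (i == j) && (b.+1 == a) then sigma i b else 0)
  + (if (i == j) && (a == delta i) && (b == delta i) then sigma i (delta i) else 0).

Definition fmx (R : Type) (T : finType) (A : T -> T -> R) : 'M[R]_#|T| :=
  \matrix_(k, l) A (enum_val k) (enum_val l).

Definition spectral_radius_lt1 (R : realType) k (A : 'M[R]_k) : Prop :=
  forall lam : R[i], eigenvalue (map_mx (fun t : R => (t%:C)%C) A) lam -> `|lam| < 1.

(* A square sub-block A(S,S) is irreducible (a 1x1 block always counts, which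
   covers "irreducible or 1x1 zero"): no nonempty proper subset T of S with
   A(T, S\T) = 0. *)
Definition block_irreducible (R : pzRingType) (T : finType) (A : T -> T -> R)
    (S : {set T}) : Prop :=
  forall U : {set T}, U \subset S -> U != finset.set0 -> U != S ->
    exists p q, [/\ p \in U, q \in S :\: U & A p q != 0].

From HB Require Import structures.
From mathcomp Require Import all_boot all_order all_algebra.
From mathcomp Require Import all_classical all_reals all_analysis.
From mathcomp Require Import complex.
From mathcomp Require Import lra.

Set Implicit Arguments.
Unset Strict Implicit.
Unset Printing Implicit Defensive.

Import Order.TTheory GRing.Theory Num.Theory.
Import numFieldNormedType.Exports.
Local Open Scope ring_scope.

(* It suffices to find, on each diagonal block of J*, nonnegative weights v with
   sum_q |J*(p,q)| v(q) < v(p) for every node p of the block: restricting a left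
   eigenvector u for lam to the last block on which it does not vanish then gives
   |lam| sum_q |u(q)| v(q) < sum_q |u(q)| v(q).  On a block with species set D,
   give every adult the weight 1 and the age class a of species i the weight
   K_i sigma_(0|i) ... sigma_(a-1|i) + (a+1) eps_i, where K_i is the sum over D
   of the |coefficients| of row (0|i) and eps_i is the slack of the hypothesis
   divided by delta_i + 1; each weighted row sum then falls short of the weight
   of its row by at least eps_i. *)

Lemma sumr_if_eq (V : nmodType) (T : finType) (P : pred T) (q0 : T) (F : T -> V) :
  \sum_(q | P q) (if q == q0 then F q else 0) = if P q0 then F q0 else 0.
Proof.
rewrite -big_mkcondr; case: ifP => Pq0.
  by rewrite (big_pred1 q0) // => q /=; case: eqP => [->|]; rewrite ?Pq0 ?andbF.
by rewrite big_pred0 // => q /=; case: eqP => [->|]; rewrite ?Pq0 ?andbF.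
Qed.

Section ContractingWeight.
Variables (C : numFieldType) (T : finType) (M : T -> T -> C).

Definition contracting_weight (S : {pred T}) (V : T -> C) :=
  {in S, forall q, 0 <= V q} /\ {in S, forall p, \sum_(q in S) `|M p q| * V q < V p}.

Lemma contracting_weight_eigen_lt1 (S : {pred T}) (V u : T -> C) (lam : C) :
  contracting_weight S V ->
  {in S, forall q, \sum_(p in S) u p * M p q = lam * u q} ->
  (exists2 p, p \in S & u p != 0) -> `|lam| < 1.
Proof.
move=> [V_ge0 V_contr] u_eig [p0 Sp0 up0].
pose N := \sum_(q in S) `|u q| * V q.
have N_gt0 : 0 < N.
  rewrite /N (bigD1 p0) //=; apply: ltr_wpDr.
    by apply: sumr_ge0 => q /andP[Sq _]; rewrite mulr_ge0 ?V_ge0.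
  rewrite mulr_gt0 ?normr_gt0 //; apply: le_lt_trans (V_contr p0 Sp0).
  by apply: sumr_ge0 => q Sq; rewrite mulr_ge0 ?V_ge0.
suff : `|lam| * N < N by rewrite -[X in _ < X]mul1r ltr_pM2r.
apply: (@le_lt_trans _ _ (\sum_(q in S) \sum_(p in S) `|u p| * (`|M p q| * V q))).
  rewrite /N mulr_sumr; apply: ler_sum => q Sq.
  under eq_bigr do rewrite mulrA.
  rewrite mulrA -normrM -u_eig // -mulr_suml ler_wpM2r ?V_ge0 //.
  by apply: le_trans (ler_norm_sum _ _ _) _; apply: ler_sum => p _; rewrite normrM.
rewrite exchange_big /N; under eq_bigr do rewrite -mulr_sumr.
rewrite [X in X < _](bigD1 p0) // [X in _ < X](bigD1 p0) //=.
apply: ltr_leD; first by rewrite ltr_pM2l ?normr_gt0 ?V_contr.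
by apply: ler_sum => p /andP[Sp _]; rewrite ler_wpM2l // ltW // V_contr.
Qed.

Lemma block_triangular_eigen_lt1 (r : nat) (blk : T -> 'I_r) (u : T -> C) (lam : C) :
  (forall p q, (blk p < blk q)%N -> M p q = 0) ->
  (forall w, exists V, contracting_weight [pred q | blk q == w] V) ->
  (forall q, \sum_p u p * M p q = lam * u q) ->
  (exists p, u p != 0) -> `|lam| < 1.
Proof.
move=> M_lower weights u_eig [p0 up0].
have [p1 up1 p1_max] := @arg_maxnP T p0 (fun p => u p != 0) blk up0.
set w := blk p1 in p1_max *.
have u_above p : (w < blk p)%N -> u p = 0.
  by move=> wp; apply/eqP; apply: contraTT wp => /p1_max; rewrite -leqNgt.
have [V V_contr] := weights w.
apply: (contracting_weight_eigen_lt1 (u := u) V_contr); last by exists p1; rewrite ?inE.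
move=> q /eqP q_w; rewrite -u_eig [RHS](bigID [pred p | blk p == w]) /=.
rewrite [X in _ = _ + X]big1 ?addr0 // => p p_w.
case: (ltngtP (blk p) w) p_w => [pw|wp|/val_inj->]; rewrite ?eqxx //.
  by rewrite M_lower ?mulr0 ?q_w.
by rewrite u_above ?mul0r.
Qed.

End ContractingWeight.

Lemma normC_real (R : rcfType) (t : R) : `|(t%:C)%C| = (`|t|%:C)%C.
Proof. by rewrite normc_def /= expr0n /= addr0 sqrtr_sqr. Qed.

Lemma contracting_weight_realC (R : rcfType) (T : finType) (A : T -> T -> R)
    (S : {pred T}) (V : T -> R) :
  contracting_weight A S V ->
  contracting_weight (fun p q => (A p q)%:C%C) S (fun q => (V q)%:C%C).
Proof.
move=> [V_ge0 V_contr]; split=> [q Sq|p Sp]; first by rewrite lecR V_ge0.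
under eq_bigr do rewrite normC_real -rmorphM.
by rewrite -rmorph_sum ltcR V_contr.
Qed.

Lemma map_fmx (R S : Type) (T : finType) (f : R -> S) (A : T -> T -> R) :
  map_mx f (fmx A) = fmx (fun p q => f (A p q)).
Proof. by apply/matrixP => k l; rewrite !mxE. Qed.

Lemma fmx_left_eigenvector (F : fieldType) (T : finType) (A : T -> T -> F) lam :
  eigenvalue (fmx A) lam ->
  exists2 u : T -> F, forall q, \sum_p u p * A p q = lam * u q & exists p, u p != 0.
Proof.
move=> /eigenvalueP [v vA v_neq0]; exists (fun p => v 0 (enum_rank p)).
  move=> q; move/matrixP: vA => /(_ 0 (enum_rank q)); rewrite !mxE => <-.
  rewrite (reindex (@enum_rank _)); last exact/onW_bij/enum_rank_bij.
  by apply: eq_bigr => p _; rewrite !mxE !enum_rankK.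
apply: contra_neqP v_neq0 => all_zero; apply/rowP => k.
rewrite mxE -[k]enum_valK; apply/eqP/negP => /negP u_neq0.
by apply: all_zero; exists (enum_val k).
Qed.

Section JuvenileWeight.
Variables (R : realFieldType) (s : nat -> R) (d : nat) (K : R).

Definition surv a := \prod_(b < a) s b.

Definition slack := (1 - s d - K * surv d) / d.+1%:R.

Definition juvenile_weight a := K * surv a + a.+1%:R * slack.

Hypotheses (s_ge0 : forall b, (b < d)%N -> 0 <= s b)
  (s_le1 : forall b, (b < d)%N -> s b <= 1)
  (K_ge0 : 0 <= K) (gain_lt : K * surv d < 1 - s d).

Lemma survS a : surv a.+1 = surv a * s a.
Proof. by rewrite /surv big_ord_recr. Qed.

Lemma surv_ge0 a : (a <= d)%N -> 0 <= surv a.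
Proof.
by move=> ad; apply: prodr_ge0 => b _; apply: s_ge0; apply: leq_trans (ltn_ord b) ad.
Qed.

Lemma slack_gt0 : 0 < slack.
Proof. by rewrite divr_gt0 // subr_gt0. Qed.

Lemma juvenile_weight_ge0 a : (a <= d)%N -> 0 <= juvenile_weight a.
Proof.
move=> ad; apply: addr_ge0; first by rewrite mulr_ge0 ?surv_ge0.
by rewrite mulr_ge0 // ltW // slack_gt0.
Qed.

Lemma juvenile_weight_step a : (a < d)%N ->
  s a * juvenile_weight a <= K * surv a.+1 + a.+1%:R * slack.
Proof.
move=> ad; rewrite mulrDr survS [surv a * _]mulrC mulrCA lerD2l.
by rewrite ler_piMl ?s_le1 // mulr_ge0 // ltW // slack_gt0.
Qed.

Lemma slack_balance : K * surv d + d%:R * slack + s d = 1 - slack.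
Proof.
have : slack * d.+1%:R = 1 - s d - K * surv d by rewrite divfK ?pnatr_eq0.
rewrite -natr1; lra.
Qed.

End JuvenileWeight.

Lemma sumr_norm_if_eq (V : numDomainType) (T : finType) (S : {pred T}) (q0 : T)
    (c : V) (v : T -> V) :
  \sum_(q in S) `|if q == q0 then c else 0| * v q = if q0 \in S then `|c| * v q0 else 0.
Proof.
rewrite -(sumr_if_eq (fun q => q \in S) q0 (fun q => `|c| * v q)).
by apply: eq_bigr => q _; case: (q == q0); rewrite ?normr0 ?mul0r.
Qed.

Section Jacobian.
Variables (R : realType) (m : nat) (delta : 'I_m -> nat)
  (sigma : 'I_m -> nat -> R) (G : 'I_m -> 'rV[R]_m -> R) (y : node delta -> R).

Local Notation x := (adults y).
Local Notation J := (jac sigma G y).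

Definition adult (i : 'I_m) : node delta :=
  Tagged (fun i => 'I_(delta i).+1) (@ord_max (delta i)).

(* Only meaningful for 0 < age p; at age 0 it is the node itself. *)
Definition younger (p : node delta) : node delta :=
  Tagged (fun i => 'I_(delta i).+1) (@inord (delta (spec p)) (age p).-1).

Definition jac_coef (i j : 'I_m) : R :=
  (if i == j then G i x else 0) + x 0 i * pderiv (G i) j x.

Lemma age_le (q : node delta) : (age q <= delta (spec q))%N.
Proof. exact: ltn_ord (tagged q). Qed.

Lemma age_younger p : age (younger p) = (age p).-1.
Proof. by rewrite /age /= inordK // ltnS (leq_trans (leq_pred _)) ?age_le. Qed.

Lemma node_eqE q i (c : 'I_(delta i).+1) :
  (q == Tagged (fun i => 'I_(delta i).+1) c) = (spec q == i) && (age q == c).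
Proof.
case: q => j b; rewrite /spec /age /=.
case: (eqVneq j i) => [e|ne]; first by subst j; rewrite eq_Tagged.
apply/negbTE; apply: contra ne => /eqP/(congr1 (@tag _ _)) /= ->.
exact: eqxx.
Qed.

Lemma adult_eqE q i : (q == adult i) = (spec q == i) && (age q == delta i).
Proof. exact: node_eqE. Qed.

Lemma younger_eqE q p : (q == younger p) = (spec q == spec p) && (age q == (age p).-1).
Proof. by rewrite node_eqE; congr (_ && (_ == _)); exact: age_younger. Qed.

Lemma jacE p q : J p q =
    (if age p == 0%N then \sum_j (if q == adult j then jac_coef (spec p) j else 0) else 0)
  + (if (0 < age p)%N && (q == younger p) then sigma (spec p) (age p).-1 else 0)
  + (if (age p == delta (spec p)) && (q == adult (spec p))
     then sigma (spec p) (delta (spec p)) else 0).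
Proof.
rewrite younger_eqE adult_eqE.
under eq_bigr => k _ do rewrite adult_eqE [spec q == k]eq_sym.
rewrite (bigD1 (spec q)) //= eqxx big1 ?addr0 => [|k /negbTE -> //].
rewrite /jac /= [spec q == spec p]eq_sym.
set i := spec p; set a := age p; set j := spec q; set b := age q.
congr (_ + _ + _); first by case: (a == 0%N); case: (b == delta j).
  have -> : (b.+1 == a) = (0 < a)%N && (b == a.-1) by case: (a).
  by case: (0 < a)%N; case: (i == j); case: eqP => //= ->.
by case: (i == j); case: (a == delta i); case: eqP => //= ->.
Qed.

Hypothesis sigma_ge0 : forall i a, (a <= delta i)%N -> 0 <= sigma i a.

Lemma jac_row_weighted_le (S : {pred node delta}) (v : node delta -> R) p :
  {in S, forall q, 0 <= v q} ->
  \sum_(q in S) `|J p q| * v q <=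
    (if age p == 0%N then \sum_(j | adult j \in S) `|jac_coef (spec p) j| * v (adult j)
     else 0)
  + (if (0 < age p)%N && (younger p \in S)
     then sigma (spec p) (age p).-1 * v (younger p) else 0)
  + (if (age p == delta (spec p)) && (adult (spec p) \in S)
     then sigma (spec p) (delta (spec p)) * v (adult (spec p)) else 0).
Proof.
move=> v_ge0; set i := spec p; set a := age p.
have norm_le q : q \in S -> `|J p q| * v q <=
    `|if a == 0%N then \sum_j (if q == adult j then jac_coef i j else 0) else 0| * v q
  + `|if (0 < a)%N && (q == younger p) then sigma i a.-1 else 0| * v q
  + `|if (a == delta i) && (q == adult i) then sigma i (delta i) else 0| * v q.
  move=> Sq; rewrite jacE -!mulrDl ler_wpM2r ?v_ge0 //.
  by apply: le_trans (ler_normD _ _) _; rewrite lerD2r ler_normD.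
apply: le_trans (ler_sum _ norm_le) _; rewrite !big_split /=.
apply: lerD; first apply: lerD.
- case: (a == 0%N); last by rewrite big1 // => q _; rewrite normr0 mul0r.
  apply: (@le_trans _ _
    (\sum_(q in S) \sum_j `|if q == adult j then jac_coef i j else 0| * v q)).
    apply: ler_sum => q Sq; rewrite -mulr_suml ler_wpM2r ?v_ge0 //.
    exact: ler_norm_sum.
  rewrite exchange_big [X in _ <= X]big_mkcond /=.
  by apply: ler_sum => j _; rewrite sumr_norm_if_eq.
- case: (0 < a)%N => /=; last by rewrite big1 // => q _; rewrite normr0 mul0r.
  rewrite sumr_norm_if_eq ger0_norm // sigma_ge0 //.
  exact: leq_trans (leq_pred _) (age_le p).
- case: (a == delta i) => /=; last by rewrite big1 // => q _; rewrite normr0 mul0r.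
  by rewrite sumr_norm_if_eq ger0_norm // sigma_ge0.
Qed.

Section Block.
Variables (r : nat) (blk : node delta -> 'I_r) (w : 'I_r).

Definition block_species :=
  [set j : 'I_m | [exists p : node delta, (spec p == j) && (blk p == w)]].

Definition species_gain (i : 'I_m) := \sum_(j in block_species) `|jac_coef i j|.

Definition node_weight (q : node delta) : R :=
  if age q == delta (spec q) then 1
  else juvenile_weight (sigma (spec q)) (delta (spec q)) (species_gain (spec q)) (age q).

Hypotheses (sigma_le1 : forall i a, (a < delta i)%N -> sigma i a <= 1)
  (gain_lt : forall i, i \in block_species ->
     species_gain i * surv (sigma i) (delta i) < 1 - sigma i (delta i)).

Lemma species_gainE i : i \in block_species ->
  species_gain i = `|G i x + x 0 i * pderiv (G i) i x|
                   + \sum_(j in block_species | j != i) `|x 0 i * pderiv (G i) j x|.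
Proof.
move=> iD; rewrite /species_gain (bigD1 i iD) /= /jac_coef eqxx; congr (_ + _).
by apply: eq_bigr => j /andP[_ ji]; rewrite eq_sym (negbTE ji) add0r.
Qed.

Lemma spec_in_block_species q : blk q = w -> spec q \in block_species.
Proof. by move=> q_w; rewrite inE; apply/existsP; exists q; rewrite q_w !eqxx. Qed.

Let sigma_juvenile_ge0 i b : (b < delta i)%N -> 0 <= sigma i b.
Proof. by move/ltnW; apply: sigma_ge0. Qed.

Let species_gain_ge0 i : 0 <= species_gain i.
Proof. exact: sumr_ge0. Qed.

Lemma node_weight_ge0 q : spec q \in block_species -> 0 <= node_weight q.
Proof.
move=> qD; rewrite /node_weight; case: ifP => // _.
apply: (juvenile_weight_ge0 (s := sigma (spec q))) (age_le q) => //.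
- exact: sigma_juvenile_ge0.
- exact: gain_lt.
Qed.

Lemma node_weighted_row_le p : blk p = w ->
  \sum_(q in [pred q | blk q == w]) `|J p q| * node_weight q <=
    (if age p == 0%N then species_gain (spec p) else 0)
  + (if (0 < age p)%N then sigma (spec p) (age p).-1 *
       juvenile_weight (sigma (spec p)) (delta (spec p)) (species_gain (spec p)) (age p).-1
     else 0)
  + (if age p == delta (spec p) then sigma (spec p) (delta (spec p)) else 0).
Proof.
move=> p_w; have pD := spec_in_block_species p_w.
have weight_ge0 : {in [pred q | blk q == w], forall q, 0 <= node_weight q}.
  by move=> q /eqP/spec_in_block_species/node_weight_ge0.
apply: le_trans (jac_row_weighted_le p weight_ge0) _.
set i := spec p in pD *; set S := [pred q | blk q == w].
have adult_weight j : node_weight (adult j) = 1 by rewrite /node_weight eqxx.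
apply: lerD; first apply: lerD.
- case: ifP => // _; rewrite big_mkcond [X in _ <= X]big_mkcond.
  apply: ler_sum => j _ /=; rewrite adult_weight mulr1.
  by case: ifP => [/eqP/spec_in_block_species ->|_]; last by case: ifP.
- case: (posnP (age p)) => [->|a_pos] //=.
  have a_lt : ((age p).-1 < delta i)%N by rewrite (leq_trans _ (age_le p)) // prednK.
  rewrite /node_weight age_younger /= (ltn_eqF a_lt).
  case: ifP => // _; rewrite mulr_ge0 ?sigma_juvenile_ge0 //.
  apply: (juvenile_weight_ge0 (s := sigma i)) (ltnW a_lt) => //; last exact: gain_lt.
  exact: sigma_juvenile_ge0.
- case: (age p == delta i) => //=.
  by case: ifP => _; rewrite ?adult_weight ?mulr1 // sigma_ge0.
Qed.

Lemma node_weight_contracting p : blk p = w ->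
  \sum_(q in [pred q | blk q == w]) `|J p q| * node_weight q < node_weight p.
Proof.
move=> p_w; apply: le_lt_trans (node_weighted_row_le p_w) _.
have gain_i := gain_lt (spec_in_block_species p_w).
have slack_i := slack_gt0 gain_i.
rewrite /node_weight; set i := spec p in gain_i slack_i *.
set K := species_gain i in gain_i slack_i *.
case a_eq: (age p) => [|b] /=.
  case: eqP gain_i => [d0|_] gain_i.
    by rewrite -d0 /surv big_ord0 mulr1 in gain_i *; lra.
  by rewrite !addr0 /juvenile_weight /surv big_ord0 mulr1 mul1r ltr_pwDr.
have b_lt : (b < delta i)%N by move: (age_le p); rewrite a_eq.
have step := juvenile_weight_step (s := sigma i) (sigma_le1 (i := i)) gain_i b_lt.
rewrite add0r; case: eqP => [d_eq|_].
  have := slack_balance (sigma i) (delta i) K.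
  by move: step slack_i; rewrite -d_eq; lra.
by rewrite /juvenile_weight -[b.+2%:R]natr1 in step *; lra.
Qed.

End Block.

End Jacobian.

Theorem theorem3 (R : realType) (m : nat) (delta : 'I_m -> nat)
    (sigma : 'I_m -> nat -> R) (G : 'I_m -> 'rV[R]_m -> R)
    (y : node delta -> R) (r : nat) (blk : node delta -> 'I_r) :
  (forall i a, (a < delta i)%N -> 0 < sigma i a <= 1) ->
  (forall i, 0 < sigma i (delta i) < 1) ->
  (forall i x, differentiable (G i) x) ->
  hmap sigma G y = y ->
  (forall i, 0 < adults y 0 i) ->
  (forall w : 'I_r, exists p, blk p = w) ->
  (forall p q, (blk p < blk q)%N -> jac sigma G y p q = 0) ->
  (forall w : 'I_r, block_irreducible (jac sigma G y) [set p | blk p == w]) ->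
  (forall (w : 'I_r) (i : 'I_m),
     let D := [set j : 'I_m | [exists p : node delta, (spec p == j) && (blk p == w)]] in
     let x := adults y in
     i \in D ->
     (`|G i x + x 0 i * pderiv (G i) i x|
        + \sum_(j in D | j != i) `|x 0 i * pderiv (G i) j x|)
       * \prod_(a < delta i) sigma i a
     < 1 - sigma i (delta i)) ->
  spectral_radius_lt1 (fmx (jac sigma G y)).
Proof.
move=> sigma_juv sigma_adult _ _ _ _ J_lower _ gain lam.
have sigma_ge0 i a : (a <= delta i)%N -> 0 <= sigma i a.
  rewrite leq_eqVlt => /orP[/eqP->|/sigma_juv/andP[/ltW//]].
  by case/andP: (sigma_adult i) => /ltW.
have sigma_le1 i a : (a < delta i)%N -> sigma i a <= 1 by case/sigma_juv/andP.
have gain_lt w i : i \in block_species blk w ->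
    species_gain G y blk w i * surv (sigma i) (delta i) < 1 - sigma i (delta i).
  by move=> iD; rewrite species_gainE //; exact: gain w i iD.
rewrite map_fmx => /fmx_left_eigenvector [u u_eig u_neq0].
apply: (block_triangular_eigen_lt1 (blk := blk) _ _ u_eig u_neq0).
  by move=> p q /J_lower ->.
move=> w; exists (fun q => (node_weight sigma G y blk w q)%:C%C).
apply: (@contracting_weight_realC R); split=> [q /eqP q_w|p /eqP p_w].
  exact/(node_weight_ge0 sigma_ge0 (gain_lt w))/spec_in_block_species.
exact: (node_weight_contracting sigma_ge0 sigma_le1 (gain_lt w) p_w).
Qed.
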